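(* Let $$\Omega=\{(\chi,\zeta,\xi):\ 0.454<\chi\le 0.45537,\ 0\le\zeta\le \tfrac12-\chi,\ 0\le\xi\le 1-2\chi-2\zeta\},$$ let $$f(\chi,\zeta)=\frac{3^{\frac12-4\chi+2\zeta}(1-2\chi-2\zeta)^{1-2\chi-2\zeta}(1-2\chi+4\zeta)^{1-2\chi+4\zeta}(6\chi-\frac32+3\zeta)^{6\chi-\frac32+3\zeta}(6\chi-\frac32-9\zeta)^{6\chi-\frac32-9\zeta}}{(2\chi+\zeta-\frac12)^{2\chi+\zeta-\frac12}\,2^{1-2\chi+\zeta}\,(\frac12-\chi-\zeta)^{\frac12-\chi-\zeta}\,(\frac12-\chi+2\zeta)^{\frac12-\chi+2\zeta}\,(2\chi-3\zeta-\frac12)^{2\chi-3\zeta-\frac12}},$$ $$g(\chi,\zeta,\xi)=\frac{2^{2\xi}\,(1/1.618)^{\xi}}{\xi^{\xi}\,(1-2\chi-2\zeta-\xi)^{1-2\chi-2\zeta-\xi}\,(1-2\chi+4\zeta-\xi)^{1-2\chi+4\zeta-\xi}\,(-\frac72+10\chi-5\zeta+\xi)^{-\frac72+10\chi-5\zeta+\xi}},$$ and $h=f\cdot g$ (with the convention $0^0=1$). Then, uniformly over positive even integers $n$ and integers $x$ with $0.454n<x\le 0.45537n$, $$\frac{q(x,n)}{(3n-1)!!}=O(n^6)\cdot\sup\{h(\chi,\zeta,\xi)^n:(\chi,\zeta,\xi)\in\Omega\},$$ where $q(x,n)$ is the quantity below.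
   Context: $q(x,n):=\sum_{i=0}^{\frac n2-x}\binom{n}{\frac n2-i}\frac{(\frac n2-i)!\,3^{n-2x-2i}}{(2x+i-\frac n2)!\,2^{\frac n2-x-i}(\frac n2-x-i)!}\cdot\frac{(\frac n2+i)!\,3^{n-2x+4i}}{(2x-3i-\frac n2)!\,2^{\frac n2-x+2i}(\frac n2-x+2i)!}\cdot\sum_{j=0}^{n-2i-2x}\binom{n-2i-2x}{j}\binom{n-2x+4i}{j}2^{2j}j!\left(\frac1{1.618}\right)^j\frac{(3(2x-\frac n2-3i))!\,(3(2x-\frac n2+i))!}{(3(2x-\frac n2-3i)-2(n-2i-2x)+j)!}$. Here $(3n-1)!!=(3n-1)(3n-3)\cdots 1$. *)

From Stdlib Require Import Reals ZArith Lra Lia.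
Open Scope R_scope.

(* factorial of an integer argument (all arguments used are >= 0 in the
   range of the theorem) *)
Definition factZ (z : Z) : R := INR (fact (Z.to_nat z)).
Definition binomZ (a b : Z) : R := C (Z.to_nat a) (Z.to_nat b).
Definition powZ (b : R) (e : Z) : R := b ^ (Z.to_nat e).

Fixpoint dfact (k : nat) : nat :=
  match k with
  | O => 1%nat
  | S O => 1%nat
  | S (S k' as _) => (k * dfact k')%nat
  end.

Definition phi_inv : R := 1 / (1618 / 1000).

Definition q (x n : Z) : R :=
  let h := (n / 2)%Z in
  sum_f_R0 (fun i0 : nat =>
    let i := Z.of_nat i0 in
    binomZ n (h - i) *
    (factZ (h - i) * powZ 3 (n - 2*x - 2*i)
      / (factZ (2*x + i - h) * powZ 2 (h - x - i) * factZ (h - x - i))) *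
    (factZ (h + i) * powZ 3 (n - 2*x + 4*i)
      / (factZ (2*x - 3*i - h) * powZ 2 (h - x + 2*i) * factZ (h - x + 2*i))) *
    sum_f_R0 (fun j0 : nat =>
      let j := Z.of_nat j0 in
      binomZ (n - 2*i - 2*x) j * binomZ (n - 2*x + 4*i) j *
      powZ 2 (2*j) * factZ j * powZ phi_inv j *
      (factZ (3*(2*x - h - 3*i)) * factZ (3*(2*x - h + i))
        / factZ (3*(2*x - h - 3*i) - 2*(n - 2*i - 2*x) + j)))
      (Z.to_nat (n - 2*i - 2*x)))
    (Z.to_nat (h - x)).

(* t^t with the convention 0^0 = 1 (only used for t >= 0) *)
Definition selfpow (t : R) : R := if Rle_dec t 0 then 1 else Rpower t t.

Definition f_fun (chi zeta : R) : R :=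
  Rpower 3 (1/2 - 4*chi + 2*zeta)
  * selfpow (1 - 2*chi - 2*zeta) * selfpow (1 - 2*chi + 4*zeta)
  * selfpow (6*chi - 3/2 + 3*zeta) * selfpow (6*chi - 3/2 - 9*zeta)
  / ( selfpow (2*chi + zeta - 1/2) * Rpower 2 (1 - 2*chi + zeta)
      * selfpow (1/2 - chi - zeta) * selfpow (1/2 - chi + 2*zeta)
      * selfpow (2*chi - 3*zeta - 1/2) ).

Definition g_fun (chi zeta xi : R) : R :=
  Rpower 2 (2*xi) * Rpower phi_inv xi
  / ( selfpow xi * selfpow (1 - 2*chi - 2*zeta - xi)
      * selfpow (1 - 2*chi + 4*zeta - xi)
      * selfpow (-(7/2) + 10*chi - 5*zeta + xi) ).

Definition h_fun (chi zeta xi : R) : R := f_fun chi zeta * g_fun chi zeta xi.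

Definition in_Omega (chi zeta xi : R) : Prop :=
  454/1000 < chi <= 45537/100000 /\
  0 <= zeta <= 1/2 - chi /\
  0 <= xi <= 1 - 2*chi - 2*zeta.

Definition hpow_set (n : nat) (v : R) : Prop :=
  exists chi zeta xi, in_Omega chi zeta xi /\ v = (h_fun chi zeta xi) ^ n.

(* Divide each term of q by (3n-1)!! = (3n)! / (2^(3n/2) (3n/2)!): it becomes a product of
   powers of 2, 3 and 1/1.618 times a ratio of six factorials over nine factorials.
   The elementary Stirling bounds
     m ln m - m <= ln m! <= m ln m - m + 1 + ln (m+1) / 2
   are applied from above to the numerator and from below to the denominator.  The
   arguments of numerator and denominator factorials have the same total, so the main
   terms m ln m - m add up exactly to n ln h(x/n, i/n, j/n), the loss being at most
   e^6 (4n)^3.  Each term is therefore at most 64 e^6 n^3 sup h^n, and there are at most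
   n^2 terms. *)

From Stdlib Require Import Reals ZArith List Lra Lia.
From Coquelicot Require Import Rcomplements.
From Coquelicot Require Coquelicot.
Import ListNotations.
Open Scope R_scope.

Section ArtanhBound.
Import Coquelicot.Coquelicot.

Lemma ln_ratio_ge y : 0 <= y < 1 -> 2 * y <= ln ((1 + y) / (1 - y)).
Proof.
  intros [Hy0 Hy1].
  set (f t := ln (1 + t) - ln (1 - t) - 2 * t).
  assert (Hf' : forall c, Rabs (c - 0) <= y -> is_derive f c (2 * c ^ 2 / (1 - c ^ 2))).
  { intros c Hc. rewrite Rminus_0_r in Hc. apply Rabs_le_between in Hc.
    unfold f. auto_derive. { repeat split; lra. } field. repeat split; nra. }
  destruct (MVT_cor4 f _ 0 y Hf' y) as [c [Hfc Hc]].
  { rewrite Rminus_0_r, Rabs_pos_eq; lra. }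
  rewrite !Rminus_0_r, (Rabs_pos_eq y) in Hc by lra. apply Rabs_le_between in Hc.
  assert (Hdf : 0 <= 2 * c ^ 2 / (1 - c ^ 2)).
  { apply Rdiv_le_0_compat; nra. }
  assert (Hf0 : f 0 = 0) by (unfold f; rewrite Rplus_0_r, Rminus_0_r, ln_1; ring).
  rewrite ln_div by lra. unfold f in Hfc, Hf0. nra.
Qed.

End ArtanhBound.

Definition xlnx (t : R) : R := if Rle_dec t 0 then 0 else t * ln t.

Lemma xlnx_pos t : 0 < t -> xlnx t = t * ln t.
Proof. intros. unfold xlnx. destruct (Rle_dec t 0); lra. Qed.

Lemma ln_fact_S m : ln (INR (fact (S m))) = ln (INR (S m)) + ln (INR (fact m)).
Proof.
  rewrite fact_simpl, mult_INR, ln_mult; auto.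
  - apply lt_0_INR; lia.
  - apply lt_0_INR, lt_O_fact.
Qed.

Lemma ln_fact_le_sharp m : (1 <= m)%nat ->
  ln (INR (fact m)) <= (INR m + / 2) * ln (INR m) - INR m + 1.
Proof.
  induction m as [|m IH]; intros Hm; [lia|].
  destruct (Nat.eq_dec m 0) as [->|Hm0].
  { simpl. rewrite ln_1. lra. }
  specialize (IH ltac:(lia)).
  assert (H1m : 1 <= INR m) by (apply (le_INR 1); lia).
  set (y := / (2 * INR m + 1)).
  assert (Hy : 0 <= y < 1).
  { unfold y; split; [left; apply Rinv_0_lt_compat; lra|].
    rewrite <- Rinv_1. apply Rinv_lt_contravar; lra. }
  (* ln (m+1) - ln m = ln ((1+y)/(1-y)) >= 2y = 1/(m + 1/2) *)
  assert (Hstep : ln (INR (S m)) = ln (INR m) + ln ((1 + y) / (1 - y))).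
  { rewrite <- ln_mult by (try apply Rdiv_lt_0_compat; lra).
    f_equal. rewrite S_INR. unfold y. field. lra. }
  pose proof (ln_ratio_ge y Hy) as Hln.
  assert (Hyy : (INR m + / 2) * (2 * y) = 1) by (unfold y; field; lra).
  assert (0 <= ln (INR m)) by (rewrite <- ln_1; apply ln_le; lra).
  rewrite ln_fact_S, Hstep, S_INR. nra.
Qed.

Lemma ln_fact_ge m : xlnx (INR m) - INR m <= ln (INR (fact m)).
Proof.
  induction m as [|m IH].
  { unfold xlnx. simpl. rewrite ln_1. destruct (Rle_dec 0 0); lra. }
  rewrite ln_fact_S.
  destruct (Nat.eq_dec m 0) as [->|Hm0].
  { unfold xlnx. simpl. rewrite ?Rplus_0_l, ln_1. destruct (Rle_dec 1 0); lra. }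
  assert (H1m : 1 <= INR m) by (apply (le_INR 1); lia).
  assert (Hlog : ln (INR (S m)) <= ln (INR m) + / INR m).
  { assert (Hinv : 0 < / INR m) by (apply Rinv_0_lt_compat; lra).
    replace (INR (S m)) with (INR m * (1 + / INR m)) by (rewrite S_INR; field; lra).
    rewrite ln_mult by lra.
    assert (ln (1 + / INR m) <= / INR m).
    { rewrite <- (ln_exp (/ INR m)) at 2. apply ln_le; [lra | apply exp_ineq1_le]. }
    lra. }
  assert (0 <= ln (INR (S m))) by (rewrite <- ln_1; apply ln_le; rewrite ?S_INR; lra).
  assert (INR m * / INR m = 1) by (field; lra).
  unfold xlnx in *. rewrite S_INR in *.
  destruct (Rle_dec (INR m) 0); [lra|]. destruct (Rle_dec (INR m + 1) 0); [lra|]. nra.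
Qed.

Lemma ln_fact_le m : ln (INR (fact m)) <= xlnx (INR m) - INR m + 1 + ln (INR m + 1) / 2.
Proof.
  destruct m as [|m].
  { unfold xlnx. simpl. rewrite ?Rplus_0_l, ln_1. destruct (Rle_dec 0 0); lra. }
  pose proof (ln_fact_le_sharp (S m) ltac:(lia)).
  assert (1 <= INR (S m)) by (apply (le_INR 1); lia).
  assert (ln (INR (S m)) <= ln (INR (S m) + 1)) by (apply ln_le; lra).
  unfold xlnx. destruct (Rle_dec (INR (S m)) 0); lra.
Qed.

Definition stirling_main (m : Z) : R := xlnx (IZR m) - IZR m.

Lemma INR_Z2Nat z : (0 <= z)%Z -> INR (Z.to_nat z) = IZR z.
Proof. intros. rewrite INR_IZR_INZ, Z2Nat.id; auto. Qed.

Lemma ln_factZ_ge m : (0 <= m)%Z -> stirling_main m <= ln (factZ m).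
Proof. intros. unfold stirling_main, factZ. rewrite <- INR_Z2Nat by auto. apply ln_fact_ge. Qed.

Lemma ln_factZ_le m N : (0 <= m < N)%Z ->
  ln (factZ m) <= stirling_main m + 1 + ln (IZR N) / 2.
Proof.
  intros Hm. unfold stirling_main, factZ. pose proof (ln_fact_le (Z.to_nat m)) as H.
  rewrite INR_Z2Nat in H by lia.
  assert (IZR m + 1 <= IZR N) by (rewrite <- plus_IZR; apply IZR_le; lia).
  assert (0 <= IZR m) by (apply IZR_le; lia).
  assert (ln (IZR m + 1) <= ln (IZR N)) by (apply ln_le; lra).
  lra.
Qed.

Definition sum_over (F : Z -> R) (l : list Z) : R := fold_right (fun m s => F m + s) 0 l.

Lemma sum_ln_factZ_ge l : Forall (fun m => 0 <= m)%Z l ->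
  sum_over stirling_main l <= sum_over (fun m => ln (factZ m)) l.
Proof.
  induction 1 as [|m l Hm _ IH]; simpl; [lra|].
  pose proof (ln_factZ_ge m Hm). lra.
Qed.

Lemma sum_ln_factZ_le l N : Forall (fun m => 0 <= m < N)%Z l ->
  sum_over (fun m => ln (factZ m)) l
  <= sum_over stirling_main l + INR (length l) * (1 + ln (IZR N) / 2).
Proof.
  induction 1 as [|m l Hm _ IH]; simpl length; rewrite ?S_INR; simpl; [lra|].
  pose proof (ln_factZ_le m N Hm). lra.
Qed.

Lemma factZ_pos z : 0 < factZ z.
Proof. apply lt_0_INR, lt_O_fact. Qed.

Lemma powZ_pos b e : 0 < b -> 0 < powZ b e.
Proof. intros; apply pow_lt; auto. Qed.

Lemma binomZ_pos a b : 0 < binomZ a b.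
Proof.
  unfold binomZ, C. apply Rdiv_lt_0_compat; [|apply Rmult_lt_0_compat]; apply lt_0_INR, lt_O_fact.
Qed.

Lemma selfpow_pos t : 0 < selfpow t.
Proof. unfold selfpow. destruct (Rle_dec t 0); [lra | apply exp_pos]. Qed.

Lemma Rpower_pos b e : 0 < Rpower b e.
Proof. apply exp_pos. Qed.

Lemma phi_inv_pos : 0 < phi_inv.
Proof. unfold phi_inv. lra. Qed.

Ltac pos := repeat first
  [ apply factZ_pos | apply binomZ_pos | apply powZ_pos | apply selfpow_pos | apply Rpower_pos
  | apply exp_pos | apply phi_inv_pos | apply Rdiv_lt_0_compat
  | apply Rmult_lt_0_compat | apply pow_lt | lra ].

Ltac ln_split := repeat first [ rewrite ln_mult by pos | rewrite ln_div by pos ].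

Ltac push_IZR := repeat first
  [ rewrite plus_IZR | rewrite minus_IZR | rewrite mult_IZR | rewrite opp_IZR ].

Lemma ln_le_inv a b : 0 < a -> 0 < b -> ln a <= ln b -> a <= b.
Proof. intros Ha Hb [H|H]; [left; apply ln_lt_inv | right; apply ln_inv]; auto. Qed.

Lemma ln_powZ b e : 0 < b -> (0 <= e)%Z -> ln (powZ b e) = IZR e * ln b.
Proof. intros. unfold powZ. rewrite ln_pow, INR_Z2Nat; auto. Qed.

Lemma ln_binomZ a b c : (0 <= b)%Z -> (0 <= c)%Z -> a = (b + c)%Z ->
  ln (binomZ a b) = ln (factZ a) - ln (factZ b) - ln (factZ c).
Proof.
  intros Hb Hc ->. unfold binomZ, C, factZ.
  replace (Z.to_nat (b + c) - Z.to_nat b)%nat with (Z.to_nat c) by lia.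
  change (ln (factZ (b + c) / (factZ b * factZ c)) =
          ln (factZ (b + c)) - ln (factZ b) - ln (factZ c)).
  ln_split. ring.
Qed.

Lemma ln_selfpow_frac N m e : 0 < N -> 0 <= m -> e = m / N ->
  ln (selfpow e) = (xlnx m - m * ln N) / N.
Proof.
  intros HN Hm ->. unfold selfpow, xlnx.
  destruct (Rle_dec (m / N) 0) as [Hle|Hgt]; destruct (Rle_dec m 0) as [Hm0|Hm0].
  - replace m with 0 by lra. rewrite ln_1. field. lra.
  - exfalso. assert (0 < m / N) by (apply Rdiv_lt_0_compat; lra). lra.
  - exfalso. apply Hgt. replace m with 0 by lra. unfold Rdiv. lra.
  - rewrite ln_Rpower, ln_div by lra. field. lra.
Qed.

Lemma dfact_odd k : (dfact (2*k+1) * 2^(k+1) * fact (k+1) = fact (2*k+2))%nat.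
Proof.
  induction k as [|k IH]; [reflexivity|].
  replace (2 * S k + 1)%nat with (S (S (2*k+1))) by lia.
  change (dfact (S (S (2*k+1)))) with (S (S (2*k+1)) * dfact (2*k+1))%nat.
  replace (S k + 1)%nat with (S (k+1)) by lia.
  replace (2 * S k + 2)%nat with (S (S (2*k+2))) by lia.
  rewrite Nat.pow_succ_r', !fact_simpl, <- IH. ring.
Qed.

Definition dfact_3n (hh : Z) : R := factZ (3 * (2 * hh)) / (powZ 2 (3 * hh) * factZ (3 * hh)).

Lemma dfact_3n_spec hh : (1 <= hh)%Z -> INR (dfact (3 * Z.to_nat (2 * hh) - 1)) = dfact_3n hh.
Proof.
  intros Hh. set (k := (Z.to_nat (3 * hh) - 1)%nat).
  pose proof (dfact_odd k) as E.
  unfold dfact_3n, factZ, powZ.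
  replace (3 * Z.to_nat (2 * hh) - 1)%nat with (2 * k + 1)%nat by lia.
  replace (Z.to_nat (3 * (2 * hh))) with (2 * k + 2)%nat by lia.
  replace (Z.to_nat (3 * hh)) with (k + 1)%nat by lia.
  rewrite <- E, !mult_INR, pow_INR.
  replace (INR 2) with 2 by (simpl; lra).
  assert (0 < INR (fact (k + 1))) by apply lt_0_INR, lt_O_fact.
  assert (0 < 2 ^ (k + 1)) by (apply pow_lt; lra).
  field. lra.
Qed.

Definition q_outer_coef (h x n i : Z) : R :=
  binomZ n (h - i) *
  (factZ (h - i) * powZ 3 (n - 2*x - 2*i)
    / (factZ (2*x + i - h) * powZ 2 (h - x - i) * factZ (h - x - i))) *
  (factZ (h + i) * powZ 3 (n - 2*x + 4*i)
    / (factZ (2*x - 3*i - h) * powZ 2 (h - x + 2*i) * factZ (h - x + 2*i))).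

Definition q_inner_term (h x n i j : Z) : R :=
  binomZ (n - 2*i - 2*x) j * binomZ (n - 2*x + 4*i) j *
  powZ 2 (2*j) * factZ j * powZ phi_inv j *
  (factZ (3*(2*x - h - 3*i)) * factZ (3*(2*x - h + i))
    / factZ (3*(2*x - h - 3*i) - 2*(n - 2*i - 2*x) + j)).

Lemma q_split x n : q x n =
  sum_f_R0 (fun i0 => q_outer_coef (n / 2) x n (Z.of_nat i0) *
    sum_f_R0 (fun j0 => q_inner_term (n / 2) x n (Z.of_nat i0) (Z.of_nat j0))
      (Z.to_nat (n - 2 * Z.of_nat i0 - 2 * x)))
    (Z.to_nat (n / 2 - x)).
Proof. reflexivity. Qed.

(* For n = 2 hh, the (i, j)-term of q divided by (3n-1)!! equals exp (const_log hh x i j)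
   times the factorials of num_factorial_args over those of den_factorial_args. *)
Definition num_factorial_args (hh x i : Z) : list Z :=
  [2*hh; 2*hh - 2*i - 2*x; 2*hh - 2*x + 4*i; 3*(2*x - hh - 3*i); 3*(2*x - hh + i); 3*hh]%Z.

Definition den_factorial_args (hh x i j : Z) : list Z :=
  [2*x + i - hh; hh - x - i; 2*x - 3*i - hh; hh - x + 2*i; j;
   2*hh - 2*i - 2*x - j; 2*hh - 2*x + 4*i - j;
   3*(2*x - hh - 3*i) - 2*(2*hh - 2*i - 2*x) + j; 3*(2*hh)]%Z.

Definition const_log (hh x i j : Z) : R :=
  (4 * IZR hh - 4 * IZR x + 2 * IZR i) * ln 3
  + (IZR hh + 2 * IZR x - IZR i + 2 * IZR j) * ln 2 + IZR j * ln phi_inv.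

Section LatticeTerm.

Variables hh x i j : Z.
(* x > 0.4 n is what makes every factorial argument nonnegative. *)
Hypothesis Hx : (4 * hh < 5 * x)%Z.
Hypothesis Hi : (0 <= i <= hh - x)%Z.
Hypothesis Hj : (0 <= j <= 2 * hh - 2 * i - 2 * x)%Z.

Let n := (2 * hh)%Z.

Lemma ln_q_term_ratio :
  ln (q_outer_coef hh x n i * q_inner_term hh x n i j / dfact_3n hh)
  = sum_over (fun m => ln (factZ m)) (num_factorial_args hh x i)
    - sum_over (fun m => ln (factZ m)) (den_factorial_args hh x i j)
    + const_log hh x i j.
Proof.
  unfold q_outer_coef, q_inner_term, dfact_3n, n. ln_split.
  rewrite (ln_binomZ (2*hh) (hh - i) (hh + i)),
          (ln_binomZ (2*hh - 2*i - 2*x) j (2*hh - 2*i - 2*x - j)),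
          (ln_binomZ (2*hh - 2*x + 4*i) j (2*hh - 2*x + 4*i - j)) by lia.
  rewrite !ln_powZ by (pos || lia).
  unfold num_factorial_args, den_factorial_args, sum_over, const_log; cbn [fold_right].
  push_IZR. ring.
Qed.

(* Both argument lists have total 3 hh + 8 x - 4 i, so the normalizations by n cancel. *)
Lemma n_ln_h_eq :
  IZR n * ln (h_fun (IZR x / IZR n) (IZR i / IZR n) (IZR j / IZR n))
  = sum_over stirling_main (num_factorial_args hh x i)
    - sum_over stirling_main (den_factorial_args hh x i j)
    + const_log hh x i j.
Proof.
  assert (Hhh : 0 < IZR hh) by (apply IZR_lt; lia).
  unfold n.
  assert (HN : 0 < IZR (2 * hh)) by (apply IZR_lt; lia).
  unfold h_fun, f_fun, g_fun. ln_split. rewrite !ln_Rpower.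
  rewrite (ln_selfpow_frac (IZR (2 * hh)) (IZR (2*hh - 2*i - 2*x))),
    (ln_selfpow_frac (IZR (2 * hh)) (IZR (2*hh - 2*x + 4*i))),
    (ln_selfpow_frac (IZR (2 * hh)) (IZR (3*(2*x - hh + i)))),
    (ln_selfpow_frac (IZR (2 * hh)) (IZR (3*(2*x - hh - 3*i)))),
    (ln_selfpow_frac (IZR (2 * hh)) (IZR (2*x + i - hh))),
    (ln_selfpow_frac (IZR (2 * hh)) (IZR (hh - x - i))),
    (ln_selfpow_frac (IZR (2 * hh)) (IZR (hh - x + 2*i))),
    (ln_selfpow_frac (IZR (2 * hh)) (IZR (2*x - 3*i - hh))),
    (ln_selfpow_frac (IZR (2 * hh)) (IZR j)),
    (ln_selfpow_frac (IZR (2 * hh)) (IZR (2*hh - 2*i - 2*x - j))),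
    (ln_selfpow_frac (IZR (2 * hh)) (IZR (2*hh - 2*x + 4*i - j))),
    (ln_selfpow_frac (IZR (2 * hh)) (IZR (3*(2*x - hh - 3*i) - 2*(2*hh - 2*i - 2*x) + j)))
    by first [assumption | apply IZR_le; lia | push_IZR; field; lra].
  unfold num_factorial_args, den_factorial_args, sum_over, stirling_main; cbn [fold_right].
  rewrite (xlnx_pos (IZR (2 * hh))), (xlnx_pos (IZR (3 * hh))), (xlnx_pos (IZR (3 * (2 * hh))))
    by (apply IZR_lt; lia).
  assert (ln_2hh : ln (IZR (2 * hh)) = ln 2 + ln (IZR hh)) by (rewrite mult_IZR, ln_mult; lra).
  assert (ln_3hh : ln (IZR (3 * hh)) = ln 3 + ln (IZR hh)) by (rewrite mult_IZR, ln_mult; lra).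
  assert (ln_6hh : ln (IZR (3 * (2 * hh))) = ln 3 + ln (IZR (2 * hh)))
    by (rewrite (mult_IZR 3), ln_mult; lra).
  rewrite ln_6hh, ln_3hh, ln_2hh.
  unfold const_log. push_IZR. field. lra.
Qed.

Lemma q_term_ratio_le :
  q_outer_coef hh x n i * q_inner_term hh x n i j / dfact_3n hh
  <= exp 6 * IZR (4 * n) ^ 3
     * h_fun (IZR x / IZR n) (IZR i / IZR n) (IZR j / IZR n) ^ Z.to_nat n.
Proof.
  assert (H4n : 0 < IZR (4 * n)) by (apply IZR_lt; unfold n; lia).
  assert (Hh : 0 < h_fun (IZR x / IZR n) (IZR i / IZR n) (IZR j / IZR n))
    by (unfold h_fun, f_fun, g_fun; pos).
  apply ln_le_inv.
  - unfold q_outer_coef, q_inner_term, dfact_3n; pos.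
  - pos.
  - rewrite ln_q_term_ratio, !ln_mult, ln_exp, !ln_pow, INR_Z2Nat, n_ln_h_eq by (pos || unfold n; lia).
    assert (Hnum : Forall (fun m => 0 <= m < 4 * n)%Z (num_factorial_args hh x i))
      by (unfold n; repeat constructor; lia).
    assert (Hden : Forall (fun m => 0 <= m)%Z (den_factorial_args hh x i j))
      by (repeat constructor; lia).
    pose proof (sum_ln_factZ_le _ _ Hnum). pose proof (sum_ln_factZ_ge _ Hden).
    simpl length in *. simpl INR in *. lra.
Qed.

End LatticeTerm.

Lemma in_Omega_lattice hh x i j :
  454/1000 * IZR (2 * hh) < IZR x <= 45537/100000 * IZR (2 * hh) ->
  (0 <= i <= hh - x)%Z -> (0 <= j <= 2 * hh - 2 * i - 2 * x)%Z ->
  in_Omega (IZR x / IZR (2 * hh)) (IZR i / IZR (2 * hh)) (IZR j / IZR (2 * hh)).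
Proof.
  intros Hx Hi Hj.
  assert (Hn : 0 < IZR (2 * hh)) by lra.
  assert (Hinv : IZR (2 * hh) * / IZR (2 * hh) = 1) by (field; lra).
  assert (0 < / IZR (2 * hh)) by (apply Rinv_0_lt_compat; lra).
  assert (0 <= IZR i <= IZR hh - IZR x) by (rewrite <- minus_IZR; split; apply IZR_le; lia).
  assert (0 <= IZR j <= IZR (2 * hh) - 2 * IZR i - 2 * IZR x).
  { replace (IZR (2 * hh) - 2 * IZR i - 2 * IZR x) with (IZR (2 * hh - 2 * i - 2 * x))
      by (push_IZR; ring).
    split; apply IZR_le; lia. }
  rewrite mult_IZR in *. unfold in_Omega, Rdiv. repeat split; nra.
Qed.

Lemma sum_nested_le (a : nat -> R) (b : nat -> nat -> R) (N : nat) (Nj : nat -> nat) (L M : R) :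
  0 <= M -> (forall i, (i <= N)%nat -> INR (S (Nj i)) <= L) ->
  (forall i j, (i <= N)%nat -> (j <= Nj i)%nat -> a i * b i j <= M) ->
  sum_f_R0 (fun i => a i * sum_f_R0 (b i) (Nj i)) N <= INR (S N) * L * M.
Proof.
  intros HM HL Hab.
  apply Rle_trans with (sum_f_R0 (fun _ => L * M) N).
  - apply sum_Rle. intros i Hi. rewrite scal_sum.
    apply Rle_trans with (sum_f_R0 (fun _ => M) (Nj i)).
    + apply sum_Rle. intros j Hj. rewrite Rmult_comm. auto.
    + rewrite sum_cte, Rmult_comm. apply Rmult_le_compat_r; auto.
  - rewrite sum_cte. right; ring.
Qed.

Lemma q_nonneg x n : 0 <= q x n.
Proof.
  rewrite q_split. apply cond_pos_sum. intros i0. apply Rmult_le_pos.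
  - left. unfold q_outer_coef. pos.
  - apply cond_pos_sum. intros j0. left. unfold q_inner_term. pos.
Qed.

Lemma q_le_sup hh x S : (4 * hh < 5 * x)%Z -> (0 < x < hh)%Z -> 0 <= S ->
  (forall i j, (0 <= i <= hh - x)%Z -> (0 <= j <= 2 * hh - 2 * i - 2 * x)%Z ->
    h_fun (IZR x / IZR (2 * hh)) (IZR i / IZR (2 * hh)) (IZR j / IZR (2 * hh))
      ^ Z.to_nat (2 * hh) <= S) ->
  q x (2 * hh) <= IZR (2 * hh) * IZR (2 * hh) * (exp 6 * IZR (4 * (2 * hh)) ^ 3 * S * dfact_3n hh).
Proof.
  intros H5x Hx HS Hpoint.
  assert (Hx1 : 1 <= IZR x <= IZR hh) by (split; apply IZR_le; lia).
  set (M := exp 6 * IZR (4 * (2 * hh)) ^ 3 * S * dfact_3n hh).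
  assert (HD : 0 < dfact_3n hh) by (unfold dfact_3n; pos).
  assert (HM : 0 <= M).
  { unfold M. apply Rmult_le_pos; [|lra]. apply Rmult_le_pos; [|lra].
    apply Rmult_le_pos; [left; apply exp_pos | apply pow_le, IZR_le; lia]. }
  rewrite q_split. replace (2 * hh / 2)%Z with hh by (rewrite Z.mul_comm, Z.div_mul; lia).
  eapply Rle_trans.
  - apply (sum_nested_le (fun i0 => q_outer_coef hh x (2 * hh) (Z.of_nat i0))
      (fun i0 j0 => q_inner_term hh x (2 * hh) (Z.of_nat i0) (Z.of_nat j0)) _
      (fun i0 => Z.to_nat (2 * hh - 2 * Z.of_nat i0 - 2 * x)) (IZR (2 * hh)) M HM).
    + intros i0 Hi0. rewrite S_INR, INR_Z2Nat by lia. push_IZR.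
      rewrite <- INR_IZR_INZ. pose proof (pos_INR i0). lra.
    + intros i0 j0 Hi0 Hj0. cbv beta.
      apply Rmult_le_reg_r with (/ dfact_3n hh); [apply Rinv_0_lt_compat; lra|].
      replace (M * / dfact_3n hh) with (exp 6 * IZR (4 * (2 * hh)) ^ 3 * S)
        by (unfold M; field; lra).
      eapply Rle_trans; [apply q_term_ratio_le; lia|].
      apply Rmult_le_compat_l; [|apply Hpoint; lia].
      left. apply Rmult_lt_0_compat; [apply exp_pos | apply pow_lt, IZR_lt; lia].
  - apply Rmult_le_compat_r; [exact HM|].
    apply Rmult_le_compat_r; [apply IZR_le; lia|].
    rewrite S_INR, INR_Z2Nat by lia. push_IZR. lra.
Qed.

Theorem lemma11 :
  exists K : R, 0 < K /\
    forall (n x : Z), (0 < n)%Z -> Z.Even n ->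
      454/1000 * IZR n < IZR x <= 45537/100000 * IZR n ->
      forall S : R, is_lub (hpow_set (Z.to_nat n)) S ->
        Rabs (q x n / INR (dfact (3 * Z.to_nat n - 1))) <= K * IZR n ^ 6 * S.
Proof.
  exists (64 * exp 6). split; [pos|].
  intros n x Hn [hh ->] Hx S [HS_ub _].
  assert (Hhh : 0 < IZR hh) by (apply IZR_lt; lia).
  assert (H5x : (4 * hh < 5 * x)%Z) by (apply lt_IZR; rewrite !mult_IZR in *; lra).
  assert (Hxh : (0 < x < hh)%Z) by (split; apply lt_IZR; rewrite mult_IZR in Hx; lra).
  assert (Hpoint : forall i j, (0 <= i <= hh - x)%Z -> (0 <= j <= 2 * hh - 2 * i - 2 * x)%Z ->
    h_fun (IZR x / IZR (2 * hh)) (IZR i / IZR (2 * hh)) (IZR j / IZR (2 * hh))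
      ^ Z.to_nat (2 * hh) <= S).
  { intros i j Hi Hj. apply HS_ub. do 3 eexists. split; [|reflexivity].
    apply in_Omega_lattice; auto. }
  assert (HS : 0 <= S).
  { apply Rle_trans with (2 := Hpoint 0%Z 0%Z ltac:(lia) ltac:(lia)).
    left. apply pow_lt. unfold h_fun, f_fun, g_fun. pos. }
  pose proof (q_le_sup hh x S H5x Hxh HS Hpoint) as Hq.
  rewrite dfact_3n_spec by lia.
  assert (HD : 0 < dfact_3n hh) by (unfold dfact_3n; pos).
  rewrite Rabs_pos_eq by (apply Rmult_le_pos; [apply q_nonneg | left; apply Rinv_0_lt_compat; lra]).
  apply Rle_div_l; [lra|]. eapply Rle_trans; [exact Hq|].
  rewrite (mult_IZR 4). set (N := IZR (2 * hh)). assert (HN : 1 <= N) by (apply IZR_le; lia).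
  assert (Hc : 0 <= 64 * exp 6 * S * dfact_3n hh * N ^ 5).
  { apply Rmult_le_pos; [|apply pow_le; lra].
    apply Rmult_le_pos; [|lra]. apply Rmult_le_pos; [|lra]. left; pos. }
  replace (N * N * (exp 6 * (4 * N) ^ 3 * S * dfact_3n hh))
    with (64 * exp 6 * S * dfact_3n hh * N ^ 5) by ring.
  nra.
Qed.
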